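(* Let $\mathbb F$ be a field of odd characteristic or characteristic $0$, and let $\overline{\mathbb F}=\mathbb F[i]$ (equal to $\mathbb F$ if $-1$ is a square in $\mathbb F$). Let $A\subset\mathbb F^3$ be a finite set and $r\in\mathbb F$. For $a=(x,y,z)\in A$, let $l_r(a)$ be the line in $\mathbb P^3(\overline{\mathbb F})$ with Plücker vector $$[1:r-z:x-iy:r^2-\|a\|^2:-(r+z):x+iy],\qquad \|a\|:=x^2+y^2+z^2.$$ (i) Let $A'\subseteq A$ have at least two points. If the lines $l_r(a)$, $a\in A'$, all pass through a common point of $\mathbb P^3(\overline{\mathbb F})$, then all points of $A'$ lie on a single isotropic line in $\mathbb F^3$. The same conclusion holds if these lines all lie in a common plane of $\mathbb P^3(\overline{\mathbb F})$. (ii) Suppose $-1$ is not a square in $\mathbb F$, and let $r_1,r_2\in\mathbb F$ be distinct and nonzero. Then there do not exist two distinct points $a,a'\in A$ and two distinct points $b,b'\in A$ such that $l_{r_1}(a),l_{r_1}(a'),l_{r_2}(b),l_{r_2}(b')$ all pass through one common point of $\mathbb P^3(\overline{\mathbb F})$. Likewise, there do not exist such points for which these four lines all lie in one common plane.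
   Context: Plücker coordinates: a line through two distinct points $(x_0:\dots:x_3)$ and $(y_0:\dots:y_3)$ of $\mathbb P^3$ has Plücker vector $$[P_{01}:P_{02}:P_{03}:P_{23}:P_{31}:P_{12}]=[\boldsymbol\omega:\boldsymbol v],\qquad P_{ij}=x_iy_j-x_jy_i.$$ For a line not at infinity, $\boldsymbol\omega$ is its direction vector. A line in $\mathbb F^3$ is isotropic if its direction vector $\boldsymbol\omega$ satisfies $\boldsymbol\omega\cdot\boldsymbol\omega=0$. *)

From HB Require Import structures.
From mathcomp Require Import all_boot all_order all_algebra.
Set Implicit Arguments. Unset Strict Implicit. Unset Printing Implicit Defensive.
Import GRing.Theory.
Local Open Scope ring_scope.

Definition vec6 {L : nzRingType} (a b c d e g : L) : 'rV[L]_6 :=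
  \row_(k < 6) nth 0 [:: a; b; c; d; e; g] k.

Definition plucker {L : nzRingType} (x y : 'rV[L]_4) : 'rV[L]_6 :=
  let X k := x 0 (inord k) in let Y k := y 0 (inord k) in
  let P k l := X k * Y l - X l * Y k in
  vec6 (P 0 1)%N (P 0 2)%N (P 0 3)%N (P 2 3)%N (P 3 1)%N (P 1 2)%N.

Definition on_line {L : fieldType} (p : 'rV[L]_4) (w : 'rV[L]_6) : Prop :=
  exists (q : 'rV[L]_4) (c : L), c != 0 /\ plucker p q = c *: w.

Definition dot4 {L : nzRingType} (u p : 'rV[L]_4) : L := \sum_(k < 4) u 0 k * p 0 k.

Definition line_in_plane {L : fieldType} (u : 'rV[L]_4) (w : 'rV[L]_6) : Prop :=
  forall p, on_line p w -> dot4 u p = 0.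

Definition concurrent {L : fieldType} (ws : seq 'rV[L]_6) : Prop :=
  exists p : 'rV[L]_4, p != 0 /\ forall w, w \in ws -> on_line p w.

Definition coplanar {L : fieldType} (ws : seq 'rV[L]_6) : Prop :=
  exists u : 'rV[L]_4, u != 0 /\ forall w, w \in ws -> line_in_plane u w.

Definition dot3 {F : nzRingType} (u v : 'rV[F]_3) : F := \sum_(k < 3) u 0 k * v 0 k.

Definition nrm {F : nzRingType} (a : 'rV[F]_3) : F := dot3 a a.

(* The line l_r(a) in P^3(L), L = F[i] via f : F -> L:
   [1 : r-z : x-iy : r^2-||a|| : -(r+z) : x+iy]. *)
Definition lr {F L : fieldType} (f : {rmorphism F -> L}) (i : L) (r : F)
    (a : 'rV[F]_3) : 'rV[L]_6 :=
  let x := a 0 (inord 0) in let y := a 0 (inord 1) in let z := a 0 (inord 2) in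
  vec6 1 (f (r - z)) (f x - i * f y) (f (r ^+ 2 - nrm a)) (- f (r + z)) (f x + i * f y).

Definition on_isotropic_line {F : fieldType} (S : seq 'rV[F]_3) : Prop :=
  exists (p w : 'rV[F]_3), w != 0 /\ dot3 w w = 0 /\
    forall a, a \in S -> exists t : F, a = p + t *: w.

(* The Plücker vector of l_r(a) satisfies the Plücker relation, and when two
   lines l_r(a), l_r'(b) meet (through a common point or in a common plane)
   their Plücker inner product vanishes, which works out to
   ||a - b|| = (r - r')^2.  In (i) all differences of points of A' are thus
   isotropic, hence by polarization pairwise orthogonal, and two orthogonal
   isotropic vectors of F^3 are parallel: their cross product is isotropic and
   orthogonal to both.  In (ii), u = a - a' is a nonzero isotropic vector
   orthogonal to c = a' - b, where c.c = (r1 - r2)^2 != 0; then u x c = t u,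
   and the BAC-CAB rule yields t^2 = -(r1 - r2)^2, so -1 is a square in F. *)

From HB Require Import structures.
From mathcomp Require Import all_boot all_order all_algebra ring.
Set Implicit Arguments. Unset Strict Implicit. Unset Printing Implicit Defensive.
Import GRing.Theory.
Local Open Scope ring_scope.

Lemma forall_inord n (P : 'I_n.+1 -> Prop) :
  (forall j, (j <= n)%N -> P (inord j)) -> forall k, P k.
Proof. by move=> hP k; rewrite -(inord_val k); apply: hP; rewrite -ltnS. Qed.

Definition row_of_seq (R : nzRingType) n (s : seq R) : 'rV[R]_n :=
  \row_(k < n) nth 0 s k.

Section Space3.
Variable R : comNzRingType.
Implicit Types (u v w : 'rV[R]_3) (t : R).

Definition cross3 u v : 'rV[R]_3 :=
  let u_ k := u 0 (inord k) in let v_ k := v 0 (inord k) in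
  row_of_seq 3 [:: u_ 1%N * v_ 2%N - u_ 2%N * v_ 1%N;
                   u_ 2%N * v_ 0%N - u_ 0%N * v_ 2%N;
                   u_ 0%N * v_ 1%N - u_ 1%N * v_ 0%N].

Lemma dot3E u v :
  dot3 u v = u 0 (inord 0) * v 0 (inord 0) + u 0 (inord 1) * v 0 (inord 1)
           + u 0 (inord 2) * v 0 (inord 2).
Proof.
rewrite /dot3 !big_ord_recr big_ord0 /= add0r.
by congr (_ + _ + _); congr (_ * _); congr (_ 0 _); apply/val_inj; rewrite /= inordK.
Qed.

Lemma dot3C u v : dot3 u v = dot3 v u.
Proof. by rewrite !dot3E; ring. Qed.

Lemma nrmB u v : nrm (u - v) = nrm u + nrm v - 2 * dot3 u v.
Proof. by rewrite /nrm !dot3E !mxE; ring. Qed.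

Lemma nrmD u v : nrm (u + v) = nrm u + nrm v + 2 * dot3 u v.
Proof. by rewrite /nrm !dot3E !mxE; ring. Qed.

Lemma dot3_delta u k : dot3 u (delta_mx 0 k) = u 0 k.
Proof.
rewrite /dot3 (bigD1 k) //= mxE !eqxx mulr1 big1 ?addr0 // => j /negbTE jk.
by rewrite mxE jk andbF mulr0.
Qed.

Lemma dot3_cross u w : dot3 u (cross3 u w) = 0.
Proof. by rewrite dot3E !mxE !inordK //=; ring. Qed.

Lemma nrm_cross u w : nrm (cross3 u w) = nrm u * nrm w - dot3 u w ^+ 2.
Proof. by rewrite /nrm !dot3E !mxE !inordK //=; ring. Qed.

Lemma cross3_crossl u w v :
  cross3 (cross3 u w) v = dot3 u v *: w - dot3 w v *: u.
Proof.
apply/rowP; apply: forall_inord => -[|[|[|//]]] _;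
  by rewrite !dot3E !mxE !inordK //=; ring.
Qed.

Lemma cross3Zl t u w : cross3 (t *: u) w = t *: cross3 u w.
Proof.
apply/rowP; apply: forall_inord => -[|[|[|//]]] _;
  by rewrite !mxE !inordK //=; ring.
Qed.

Lemma cross3_0l w : cross3 0 w = 0.
Proof. by have := cross3Zl 0 0 w; rewrite !scale0r. Qed.

End Space3.

Section IsotropicVectors.
Variable F : fieldType.
Implicit Types (a b p q u w c : 'rV[F]_3).

Lemma cross3_eq0_parallel u w :
  cross3 u w = 0 -> u != 0 -> exists t, w = t *: u.
Proof.
move=> huw; have [k uk0 _ | u0] := pickP (fun k => u 0 k != 0); last first.
  by case/eqP; apply/rowP => k; rewrite mxE; apply/eqP/negbFE/u0.
have /esym := cross3_crossl u w (delta_mx 0 k).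
rewrite huw cross3_0l !dot3_delta => /eqP; rewrite subr_eq0 => /eqP huk.
exists (w 0 k / u 0 k).
by rewrite mulrC -scalerA -huk scalerA mulVf ?scale1r.
Qed.

(* If [u x w] were nonzero, the BAC-CAB rule would make both [u] and [w]
   parallel to it, forcing [u x w = 0]. *)
Lemma isotropic_orthogonal_parallel u w :
  u != 0 -> nrm u = 0 -> dot3 u w = 0 -> nrm w = 0 -> exists t, w = t *: u.
Proof.
rewrite /nrm => hu nu uw nw; set x := cross3 u w.
have [x0 | xn0] := eqVneq x 0; first exact: cross3_eq0_parallel.
have [l ul] : exists l, u = l *: x.
  by apply: cross3_eq0_parallel => //; rewrite cross3_crossl nu dot3C uw !scale0r subr0.
have xw0 : cross3 x w = 0 by rewrite cross3_crossl uw nw !scale0r subr0.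
by move: xn0; rewrite {1}/x ul cross3Zl xw0 scaler0 eqxx.
Qed.

Lemma isotropic_orthogonal_sqrtN1 u c e :
  u != 0 -> nrm u = 0 -> dot3 u c = 0 -> nrm c = e ^+ 2 -> e != 0 ->
  exists s : F, s ^+ 2 = -1.
Proof.
move=> hu nu uc nc he; set x := cross3 u c.
have [t xu] : exists t, x = t *: u.
  apply: isotropic_orthogonal_parallel => //; first exact: dot3_cross.
  by rewrite nrm_cross nu uc mul0r expr2 mul0r subrr.
have E := cross3_crossl u c c.
rewrite -/x [in LHS]xu cross3Zl -/x xu scalerA uc scale0r sub0r -/(nrm c) nc in E.
have /eqP : (t ^+ 2 + e ^+ 2) *: u = 0 by rewrite scalerDl expr2 E addNr.
rewrite scaler_eq0 (negbTE hu) orbF addr_eq0 => /eqP te.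
by exists (e / t); rewrite expr_div_n te invrN mulrN divff // expf_neq0.
Qed.

Hypothesis two_neq0 : (2 : F) != 0.

Lemma pairwise_isotropic_on_line (S : seq 'rV[F]_3) p q :
  p \in S -> q \in S -> p != q ->
  {in S &, forall a b, nrm (a - b) = 0} -> on_isotropic_line S.
Proof.
move=> pS qS pq iso; have qp0 : q - p != 0 by rewrite subr_eq0 eq_sym.
exists p, (q - p); split=> //; split=> [|a aS]; first exact: iso.
have [t tE] : exists t, a - p = t *: (q - p).
  apply: isotropic_orthogonal_parallel; [by [] | exact: iso | | exact: iso].
  have := iso a q aS qS; rewrite (_ : a - q = a - p - (q - p)); last first.
    by rewrite opprB addrA subrK.
  rewrite nrmB !iso // add0r sub0r => /eqP.
  by rewrite oppr_eq0 mulf_eq0 (negbTE two_neq0) dot3C => /eqP.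
by exists t; rewrite -tE addrC subrK.
Qed.

Lemma isotropic_equidistant_sqrtN1 a a' b e :
  a != a' -> nrm (a - a') = 0 -> nrm (a - b) = e ^+ 2 -> nrm (a' - b) = e ^+ 2 ->
  e != 0 -> exists s : F, s ^+ 2 = -1.
Proof.
move=> aa' iso da da' he.
apply: (@isotropic_orthogonal_sqrtN1 (a - a') (a' - b) e) => //.
  by rewrite subr_eq0.
move: da; rewrite (_ : a - b = a - a' + (a' - b)); last by rewrite subrKA.
rewrite nrmD iso da' add0r.
by rewrite -[RHS]addr0 => /addrI /eqP; rewrite mulf_eq0 (negbTE two_neq0) => /eqP.
Qed.

End IsotropicVectors.

Lemma det2_eq0 (L : fieldType) (a b c d x y : L) :
  a * x + b * y = 0 -> c * x + d * y = 0 -> (x != 0) || (y != 0) ->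
  a * d - b * c = 0.
Proof.
move=> h1 h2 xy.
have /eqP Ex : (a * d - b * c) * x = d * (a * x + b * y) - b * (c * x + d * y).
  by ring.
have /eqP Ey : (a * d - b * c) * y = a * (c * x + d * y) - c * (a * x + b * y).
  by ring.
rewrite h1 h2 !mulr0 subrr in Ex Ey.
apply/eqP; case/orP: xy => [x0 | y0].
  by move: Ex; rewrite mulf_eq0 (negbTE x0) orbF.
by move: Ey; rewrite mulf_eq0 (negbTE y0) orbF.
Qed.

Section PluckerLines.
Variable L : fieldType.
Implicit Types (p u : 'rV[L]_4) (w : 'rV[L]_6) (b c d e g : L).

Definition lines_meet w w' :=
  (exists p, p != 0 /\ on_line p w /\ on_line p w') \/
  (exists u, u != 0 /\ line_in_plane u w /\ line_in_plane u w').

Lemma concurrent_meet ws : concurrent ws -> {in ws &, forall w w', lines_meet w w'}.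
Proof. by case=> p [p0 hp] w w' hw hw'; left; exists p; split=> //; split; apply: hp. Qed.

Lemma coplanar_meet ws : coplanar ws -> {in ws &, forall w w', lines_meet w w'}.
Proof. by case=> u [u0 hu] w w' hw hw'; right; exists u; split=> //; split; apply: hu. Qed.

Lemma dot4E u p : dot4 u p = u 0 (inord 0) * p 0 (inord 0) + u 0 (inord 1) * p 0 (inord 1)
  + u 0 (inord 2) * p 0 (inord 2) + u 0 (inord 3) * p 0 (inord 3).
Proof.
rewrite /dot4 !big_ord_recr big_ord0 /= add0r.
by congr (_ + _ + _ + _); congr (_ * _); congr (_ 0 _); apply/val_inj; rewrite /= inordK.
Qed.

Lemma on_line_vec6 p b c d e g : on_line p (vec6 1 b c d e g) ->
  p 0 (inord 3) = p 0 (inord 1) * c + p 0 (inord 0) * e /\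
  p 0 (inord 2) = p 0 (inord 1) * b - p 0 (inord 0) * g.
Proof.
case=> q [k [k0 /rowP E]].
have := E (inord 0); have := E (inord 1); have := E (inord 2).
have := E (inord 4); have := E (inord 5).
rewrite /plucker !mxE !inordK //= !mulr1 => Eg Ee Ec Eb Ek.
split; apply: (mulfI k0).
  by rewrite mulrDr mulrCA [k * (_ * e)]mulrCA -Ec -Ee -Ek; ring.
by rewrite mulrBr mulrCA [k * (_ * g)]mulrCA -Eb -Eg -Ek; ring.
Qed.

Lemma vec6_on_line_points b c d e g : d + b * e + c * g = 0 ->
  on_line (row_of_seq 4 [:: 0; -1; -b; -c]) (vec6 1 b c d e g) /\
  on_line (row_of_seq 4 [:: 1; 0; -g; e]) (vec6 1 b c d e g).
Proof.
move=> rel; set P := row_of_seq 4 _; set Q := row_of_seq 4 _.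
have PQ : plucker P Q = vec6 1 b c d e g.
  apply/rowP; apply: forall_inord => -[|[|[|[|[|[|//]]]]]] _;
    rewrite !mxE !inordK //=; try ring.
  by rewrite -[RHS]subr0 -rel; ring.
split; first by exists Q, 1; rewrite oner_eq0 scale1r.
exists P, (-1); rewrite oppr_eq0 oner_eq0 -PQ; split=> //.
by apply/rowP; apply: forall_inord => -[|[|[|[|[|[|//]]]]]] _;
  rewrite !mxE !inordK //=; ring.
Qed.

(* Under the Plücker relations, the left-hand side of the conclusion is minus
   the Plücker inner product of the two lines. *)
Lemma concurrent_vec6 p b c d e g b' c' d' e' g' : p != 0 ->
  on_line p (vec6 1 b c d e g) -> on_line p (vec6 1 b' c' d' e' g') ->
  (c - c') * (g - g') + (e - e') * (b - b') = 0.
Proof.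
move=> p0 /on_line_vec6[h3 h2] /on_line_vec6[h3' h2'].
have s1 : (c - c') * p 0 (inord 1) + (e - e') * p 0 (inord 0) = 0.
  by rewrite -(subrr (p 0 (inord 3))) {1}h3 h3'; ring.
have s2 : (b' - b) * p 0 (inord 1) + (g - g') * p 0 (inord 0) = 0.
  by rewrite -(subrr (p 0 (inord 2))) {1}h2' h2; ring.
have nz : (p 0 (inord 1) != 0) || (p 0 (inord 0) != 0).
  apply: contraNT p0; rewrite negb_or !negbK => /andP[/eqP p1 /eqP p0].
  apply/eqP/rowP; apply: forall_inord => -[|[|[|[|//]]]] _; rewrite mxE //.
    by rewrite h2 p1 p0 !mul0r subrr.
  by rewrite h3 p1 p0 !mul0r addr0.
by rewrite -(det2_eq0 s1 s2 nz); ring.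
Qed.

Lemma coplanar_vec6 u b c d e g b' c' d' e' g' : u != 0 ->
  d + b * e + c * g = 0 -> d' + b' * e' + c' * g' = 0 ->
  line_in_plane u (vec6 1 b c d e g) -> line_in_plane u (vec6 1 b' c' d' e' g') ->
  (c - c') * (g - g') + (e - e') * (b - b') = 0.
Proof.
move=> u0 /vec6_on_line_points[P Q] /vec6_on_line_points[P' Q'] hl hl'.
move: (hl _ P) (hl _ Q) (hl' _ P') (hl' _ Q').
rewrite !dot4E !mxE !inordK //= !mulr0 !mulr1 !add0r !addr0 !mulrN1 !mulrN.
move=> hP hQ hP' hQ'.
have s1 : (c - c') * u 0 (inord 3) + (b - b') * u 0 (inord 2) = 0.
  by rewrite -[LHS]addr0 -{1}hP -hP'; ring.
have s2 : (e' - e) * u 0 (inord 3) + (g - g') * u 0 (inord 2) = 0.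
  by rewrite -[LHS]addr0 -{1}hQ -hQ'; ring.
have nz : (u 0 (inord 3) != 0) || (u 0 (inord 2) != 0).
  apply: contraNT u0; rewrite negb_or !negbK => /andP[/eqP u3 /eqP u2].
  move: hP hQ; rewrite u2 u3 !mul0r !subr0 !addr0 => /eqP; rewrite oppr_eq0 => /eqP u1 u0.
  by apply/eqP/rowP; apply: forall_inord => -[|[|[|[|//]]]] _; rewrite mxE.
by rewrite -(det2_eq0 s1 s2 nz); ring.
Qed.

Lemma lines_meet_vec6 b c d e g b' c' d' e' g' :
  d + b * e + c * g = 0 -> d' + b' * e' + c' * g' = 0 ->
  lines_meet (vec6 1 b c d e g) (vec6 1 b' c' d' e' g') ->
  (c - c') * (g - g') + (e - e') * (b - b') = 0.
Proof.
move=> rel rel' [[p [p0 [h h']]] | [u [u0 [h h']]]].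
  exact: concurrent_vec6 h h'.
exact: coplanar_vec6 rel rel' h h'.
Qed.

End PluckerLines.

Section SphereLines.
Variables (F L : fieldType) (f : {rmorphism F -> L}) (i : L).
Hypothesis sqr_i : i ^+ 2 = -1.

Lemma lr_plucker_relation r a :
  f (r ^+ 2 - nrm a) + f (r - a 0 (inord 2)) * - f (r + a 0 (inord 2))
  + (f (a 0 (inord 0)) - i * f (a 0 (inord 1)))
    * (f (a 0 (inord 0)) + i * f (a 0 (inord 1))) = 0.
Proof. by rewrite /nrm dot3E !(rmorphB, rmorphD, rmorphM, rmorphXn); ring: sqr_i. Qed.

Lemma lr_meet r r' a b : lines_meet (lr f i r a) (lr f i r' b) ->
  nrm (a - b) = (r - r') ^+ 2.
Proof.
move/(lines_meet_vec6 (lr_plucker_relation r a) (lr_plucker_relation r' b)) => side.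
apply/eqP; rewrite -subr_eq0 -(fmorph_eq0 f); apply/eqP; rewrite -side.
by rewrite /nrm dot3E !mxE !(rmorphB, rmorphD, rmorphM, rmorphXn); ring: sqr_i.
Qed.

End SphereLines.

Lemma undup_two_distinct (T : eqType) (s : seq T) : (2 <= size (undup s))%N ->
  exists a b, [/\ a \in s, b \in s & a != b].
Proof.
have := undup_uniq s; case: (undup s) (mem_undup s) => [|a [|b t]] //= mem.
rewrite !inE negb_or => /andP[/andP[ab _] _] _.
by exists a, b; rewrite -!mem ?inE ?eqxx ?orbT.
Qed.

Theorem mainTheorem7 (F L : fieldType) (f : {rmorphism F -> L}) (i : L)
    (hchar : ~~ (2%N \in [pchar F]))
    (hi : i ^+ 2 = -1)
    (hgen : forall z : L, exists a b : F, z = f a + f b * i)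
    (A : seq 'rV[F]_3) :
  (forall (r : F) (A' : seq 'rV[F]_3), {subset A' <= A} -> (2 <= size (undup A'))%N ->
     (concurrent [seq lr f i r a | a <- A'] -> on_isotropic_line A') /\
     (coplanar [seq lr f i r a | a <- A'] -> on_isotropic_line A')) /\
  (~ (exists s : F, s ^+ 2 = -1) ->
   forall r1 r2 : F, r1 != r2 -> r1 != 0 -> r2 != 0 ->
     ~ (exists a a' b b' : 'rV[F]_3,
          [/\ a \in A, a' \in A, b \in A & b' \in A] /\ a != a' /\ b != b' /\
          concurrent [:: lr f i r1 a; lr f i r1 a'; lr f i r2 b; lr f i r2 b']) /\
     ~ (exists a a' b b' : 'rV[F]_3,
          [/\ a \in A, a' \in A, b \in A & b' \in A] /\ a != a' /\ b != b' /\
          coplanar [:: lr f i r1 a; lr f i r1 a'; lr f i r2 b; lr f i r2 b'])).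
Proof.
have two_neq0 : (2 : F) != 0 by move: hchar; rewrite inE.
split=> [r A' _ /undup_two_distinct[a [b [aA' bA' ab]]] | no_sqrtN1 r1 r2 r12 _ _].
  have isotropic : {in [seq lr f i r a | a <- A'] &, forall w w', lines_meet w w'} ->
      on_isotropic_line A'.
    move=> meet; apply: (pairwise_isotropic_on_line two_neq0 aA' bA' ab) => c d cA' dA'.
    rewrite (lr_meet hi (meet _ _ (map_f (lr f i r) cA') (map_f (lr f i r) dA'))).
    by rewrite subrr expr2 mul0r.
  by split=> [/concurrent_meet | /coplanar_meet]; apply: isotropic.
have no_config a a' b : a != a' -> lines_meet (lr f i r1 a) (lr f i r1 a') ->
    lines_meet (lr f i r1 a) (lr f i r2 b) -> lines_meet (lr f i r1 a') (lr f i r2 b) ->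
    False.
  move=> aa' /(lr_meet hi) iso /(lr_meet hi) da /(lr_meet hi) da'.
  apply: no_sqrtN1 (isotropic_equidistant_sqrtN1 two_neq0 aa' _ da da' _).
    by rewrite iso subrr expr2 mul0r.
  by rewrite subr_eq0.
split=> -[a [a' [b [b' [_ [aa' [_ H]]]]]]];
  [move/concurrent_meet: H | move/coplanar_meet: H] => meet;
  by apply: (no_config a a' b aa'); apply: meet; rewrite !inE eqxx ?orbT.
Qed.
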